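(* Let $\Delta_{\mu,\nu}(x)=[\tilde{t}_{\mu,\nu}(x)]^2-\tilde{t}_{\mu-1,\nu-1}(x)\tilde{t}_{\mu+1,\nu+1}(x)$. Suppose that $\mu>-3$ and $|\nu|<\mu+3$. Then, for all $x>0$, $$0<\frac{2(\frac{1}{2}x)^{2\mu+2}}{(\mu+\nu+3)\big[\Gamma(\frac{\mu-\nu+3}{2})\Gamma(\frac{\mu+\nu+3}{2})\big]^2}\leq\Delta_{\mu,\nu}(x)\leq\frac{2[\tilde{t}_{\mu,\nu}(x)]^2}{\mu+\nu+3}.$$
   Context: For real $\mu,\nu$ the (normalized) modified Lommel function of the first kind is $$\tilde{t}_{\mu,\nu}(x)=\sum_{k=0}^\infty\frac{(\frac{1}{2}x)^{\mu+2k+1}}{\Gamma\big(k+\frac{\mu-\nu+3}{2}\big)\Gamma\big(k+\frac{\mu+\nu+3}{2}\big)},\quad x>0.$$ *)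

From Stdlib Require Import Reals Lra ZArith.
From Coquelicot Require Import Coquelicot.
Open Scope R_scope.

Definition Gamma (s : R) : R :=
  RInt_gen (fun t => Rpower t (s - 1) * exp (- t)) (at_right 0) (Rbar_locally p_infty).

(* Reciprocal Gamma 1/Gamma(s), an entire function, extended to all real s
   through the functional equation 1/Gamma(s) = s(s+1)...(s+n-1)/Gamma(s+n)
   with n = max(0, up(-s)), so that s + n > 0
   (so 1/Gamma vanishes at 0, -1, -2, ...). *)
Definition rgamma (s : R) : R :=
  let n := Z.to_nat (up (- s)) in
  (fix pr (k : nat) : R := match k with O => 1 | S k' => pr k' * (s + INR k') end) n
  / Gamma (s + INR n).

Definition ttilde (mu nu x : R) : R :=
  Series (fun k : nat =>
    Rpower (x / 2) (mu + 2 * INR k + 1)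
    * rgamma (INR k + (mu - nu + 3) / 2)
    * rgamma (INR k + (mu + nu + 3) / 2)).

Definition LommelDelta (mu nu x : R) : R :=
  (ttilde mu nu x) ^ 2 - ttilde (mu - 1) (nu - 1) x * ttilde (mu + 1) (nu + 1) x.

From Stdlib Require Import Reals Lra Lia Classical.
From Coquelicot Require Import Coquelicot.
Open Scope R_scope.

(* Put a = (mu - nu + 3)/2, b = (mu + nu + 3)/2 and q_k = (x/2)^(2k) / (Gamma(k + a) Gamma(k + b)).
   The three Lommel functions in Delta are (x/2)^(mu+1) sum q_k, (x/2)^mu sum (k + b - 1) q_k and
   (x/2)^(mu+2) sum q_k / (k + b), so Delta / (x/2)^(2 mu + 2) is a Cauchy-product series with
   coefficients c_n = sum_k q_k q_(n-k) (1 - (k + b - 1) / (n - k + b)), and c_0 = q_0^2 / b.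
   Since q_(k+1) / q_k = (x/2)^2 / ((k + a)(k + b)), pairing the terms k + 1 and n - k shows c_n >= 0,
   while pairing k with n - k shows c_n <= (1/b) sum_k q_k q_(n-k); summing gives both bounds.
   The recurrence Gamma(s + 1) = s Gamma(s) behind the ratio q_(k+1) / q_k comes from the integral
   definition of Gamma by integration by parts. *)

Lemma ball_R_iff (x e y : R) : ball x e y <-> Rabs (y - x) < e.
Proof. reflexivity. Qed.

Lemma filter_prod_0_oo (P : R * R -> Prop) :
  (forall u v, 0 < u -> 0 < v -> P (u, v)) ->
  filter_prod (at_right 0) (Rbar_locally p_infty) P.
Proof.
  intros HP. apply Filter_prod with (Q := fun u => 0 < u) (R := fun v => 0 < v).
  - exists (mkposreal 1 Rlt_0_1). now intros.
  - now exists 0.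
  - intros u v Hu Hv. now apply HP.
Qed.

Section ImproperIntegral_0_oo.

Variable f : R -> R.
Hypothesis f_cont : forall t, 0 < t -> continuous f t.
Hypothesis f_ge0 : forall t, 0 < t -> 0 <= f t.

Lemma ex_RInt_0_oo (u v : R) : 0 < u -> u <= v -> ex_RInt f u v.
Proof.
  intros Hu Huv. apply (ex_RInt_continuous (V := R_CompleteNormedModule)).
  intros t Ht. apply f_cont. rewrite Rmin_left in Ht; lra.
Qed.

Lemma RInt_subinterval_le (u v u' v' : R) :
  0 < u' -> u' <= u -> u <= v -> v <= v' -> RInt f u v <= RInt f u' v'.
Proof.
  intros Hu' Hu Huv Hv.
  rewrite <- (RInt_Chasles (V := R_CompleteNormedModule) f u' u v') by (apply ex_RInt_0_oo; lra).
  rewrite <- (RInt_Chasles (V := R_CompleteNormedModule) f u v v') by (apply ex_RInt_0_oo; lra).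
  assert (0 <= RInt f u' u).
  { apply RInt_ge_0; [lra | apply ex_RInt_0_oo; lra | intros; apply f_ge0; lra]. }
  assert (0 <= RInt f v v').
  { apply RInt_ge_0; [lra | apply ex_RInt_0_oo; lra | intros; apply f_ge0; lra]. }
  simpl. unfold plus; simpl. lra.
Qed.

Lemma is_RInt_gen_0_oo_intro (L : R) :
  (forall eps, 0 < eps -> exists d, 0 < d /\ exists M, forall u v,
     0 < u < d -> M < v -> Rabs (RInt f u v - L) < eps) ->
  is_RInt_gen f (at_right 0) (Rbar_locally p_infty) L.
Proof.
  intros H P [eps Heps].
  destruct (H eps (cond_pos eps)) as [d [Hd [M HM]]].
  apply Filter_prod with (Q := fun u => 0 < u < d) (R := fun v => Rmax M d < v).
  - exists (mkposreal d Hd). intros u Hu Hu0. rewrite ball_R_iff in Hu. simpl in Hu.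
    rewrite Rminus_0_r in Hu. apply Rabs_def2 in Hu. lra.
  - now exists (Rmax M d).
  - intros u v Hu Hv. pose proof (Rmax_l M d). pose proof (Rmax_r M d).
    exists (RInt f u v). split.
    + apply (RInt_correct (V := R_CompleteNormedModule)), ex_RInt_0_oo; simpl; lra.
    + apply Heps, HM; simpl; lra.
Qed.

Lemma is_RInt_gen_0_oo_sup (M : R) :
  (forall u v, 0 < u <= v -> RInt f u v <= M) ->
  exists L, is_RInt_gen f (at_right 0) (Rbar_locally p_infty) L
    /\ forall u v, 0 < u <= v -> RInt f u v <= L.
Proof.
  intros HM.
  set (E := fun y => exists u v, 0 < u <= v /\ y = RInt f u v).
  assert (HE : exists y, E y) by (exists (RInt f 1 1), 1, 1; split; [lra | auto]).
  assert (HB : bound E) by (exists M; intros y [u [v [Huv ->]]]; now apply HM).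
  destruct (completeness E HB HE) as [L [HL_ub HL_least]].
  assert (HL : forall u v, 0 < u <= v -> RInt f u v <= L)
    by (intros u v Huv; apply HL_ub; now exists u, v).
  exists L. split; [|exact HL].
  apply is_RInt_gen_0_oo_intro. intros eps Heps.
  destruct (classic (exists y, E y /\ L - eps < y)) as [[y [[u0 [v0 [Huv0 ->]]] Hy]] | Hnot].
  - exists u0. split; [lra|]. exists v0. intros u v Hu Hv.
    pose proof (RInt_subinterval_le u0 v0 u v ltac:(lra) ltac:(lra) ltac:(lra) ltac:(lra)).
    pose proof (HL u v ltac:(lra)).
    apply Rabs_def1; lra.
  - exfalso. enough (L <= L - eps) by lra.
    apply HL_least. intros y Hy. apply Rnot_lt_le. intros Hlt. apply Hnot. now exists y.
Qed.

End ImproperIntegral_0_oo.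

Lemma is_derive_Rpower (r t : R) :
  0 < t -> is_derive (fun x => Rpower x r) t (r * Rpower t (r - 1)).
Proof. intros Ht. apply is_derive_Reals. now apply derivable_pt_lim_power. Qed.

Lemma Rpower_continuous (r t : R) : 0 < t -> continuous (fun x => Rpower x r) t.
Proof.
  intros Ht. apply (ex_derive_continuous (K := R_AbsRing) (V := R_NormedModule)).
  eexists. now apply is_derive_Rpower.
Qed.

Lemma Rpower_gt0 (x r : R) : 0 < Rpower x r.
Proof. apply exp_pos. Qed.

Lemma exp_le_compat (x y : R) : x <= y -> exp x <= exp y.
Proof. intros [H | ->]; [left; now apply exp_increasing | apply Rle_refl]. Qed.

Definition Rpower_exp_const (r : R) : R :=
  exp ((Rabs r + 1) * (ln (2 * (Rabs r + 1)) - 1)).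

(* From [ln y <= y - 1] at [y = t / (2 (|r| + 1))]. *)
Lemma Rpower_exp_le (r t : R) :
  1 <= t -> Rpower t r * exp (- t) <= Rpower_exp_const r * exp (- t / 2).
Proof.
  intros Ht. unfold Rpower, Rpower_exp_const. rewrite <- !exp_plus.
  apply exp_le_compat.
  set (m := Rabs r + 1).
  assert (Hm : 1 <= m) by (pose proof (Rabs_pos r); unfold m; lra).
  assert (Hlnt : 0 <= ln t) by (rewrite <- ln_1; apply ln_le; lra).
  assert (H1 : r * ln t <= m * ln t).
  { apply Rmult_le_compat_r; [exact Hlnt|]. pose proof (Rle_abs r). unfold m; lra. }
  assert (H2 : ln t = ln (2 * m) + ln (t / (2 * m))).
  { rewrite <- ln_mult by (try apply Rdiv_lt_0_compat; lra). f_equal. field. lra. }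
  assert (H3 : ln (t / (2 * m)) <= t / (2 * m) - 1).
  { pose proof (exp_ineq1_le (ln (t / (2 * m)))).
    rewrite exp_ln in H by (apply Rdiv_lt_0_compat; lra). lra. }
  apply Rmult_le_compat_l with (r := m) in H3; [|lra].
  replace (m * (t / (2 * m) - 1)) with (t / 2 - m) in H3 by (field; lra).
  rewrite H2, Rmult_plus_distr_l in H1. nra.
Qed.

Definition gamma_integrand (s t : R) : R := Rpower t (s - 1) * exp (- t).

Lemma gamma_integrand_gt0 (s t : R) : 0 < gamma_integrand s t.
Proof. apply Rmult_lt_0_compat; [apply Rpower_gt0 | apply exp_pos]. Qed.

Lemma exp_opp_continuous (c t : R) : continuous (fun x => exp (- (c * x))) t.
Proof. apply (ex_derive_continuous (K := R_AbsRing) (V := R_NormedModule)). auto_derive. auto. Qed.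

Lemma gamma_integrand_continuous (s t : R) : 0 < t -> continuous (gamma_integrand s) t.
Proof.
  intros Ht. apply (continuous_mult (fun x => Rpower x (s - 1)) (fun x => exp (- x))).
  - now apply Rpower_continuous.
  - apply (continuous_ext (fun x => exp (- (1 * x)))); [intros; now rewrite Rmult_1_l|].
    apply exp_opp_continuous.
Qed.

Lemma is_derive_gamma_integrand (s t : R) :
  0 < t -> is_derive (gamma_integrand (s + 1)) t (s * gamma_integrand s t - gamma_integrand (s + 1) t).
Proof.
  intros Ht. unfold gamma_integrand. replace (s + 1 - 1) with s by ring.
  assert (Hexp : is_derive (fun x => exp (- x)) t (- exp (- t))) by (auto_derive; auto; ring).
  replace (s * (Rpower t (s - 1) * exp (- t)) - Rpower t s * exp (- t))
    with (s * Rpower t (s - 1) * exp (- t) + Rpower t s * - exp (- t)) by ring.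
  exact (Derive.is_derive_mult _ _ _ _ _ (is_derive_Rpower s t Ht) Hexp).
Qed.

Lemma RInt_gamma_integrand_le_0_1 (s u : R) :
  0 < s -> 0 < u <= 1 -> RInt (gamma_integrand s) u 1 <= / s.
Proof.
  intros Hs Hu.
  assert (Hpow : is_RInt (fun x => Rpower x (s - 1)) u 1 (/ s * Rpower 1 s - / s * Rpower u s)).
  { apply (is_RInt_derive (V := R_CompleteNormedModule) (fun x => / s * Rpower x s)).
    - intros x Hx. rewrite Rmin_left in Hx by lra.
      replace (Rpower x (s - 1)) with (/ s * (s * Rpower x (s - 1))) by (field; lra).
      apply is_derive_scal, is_derive_Rpower. lra.
    - intros x Hx. rewrite Rmin_left in Hx by lra. apply Rpower_continuous. lra. }
  assert (Hle : RInt (gamma_integrand s) u 1 <= / s * Rpower 1 s - / s * Rpower u s).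
  { apply (is_RInt_le (gamma_integrand s) (fun x => Rpower x (s - 1)) u 1);
      [lra | | exact Hpow |].
    - apply (RInt_correct (V := R_CompleteNormedModule)), ex_RInt_0_oo; try lra.
      apply gamma_integrand_continuous.
    - intros x Hx. unfold gamma_integrand.
      pose proof (Rpower_gt0 x (s - 1)).
      assert (exp (- x) <= 1) by (rewrite <- exp_0; apply exp_le_compat; lra).
      nra. }
  replace (Rpower 1 s) with 1 in Hle by (unfold Rpower; rewrite ln_1, Rmult_0_r; now rewrite exp_0).
  pose proof (Rpower_gt0 u s). pose proof (Rinv_0_lt_compat s Hs). nra.
Qed.

Lemma RInt_gamma_integrand_le_1_oo (s v : R) :
  1 <= v -> RInt (gamma_integrand s) 1 v <= 2 * Rpower_exp_const (s - 1).
Proof.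
  intros Hv. set (C := Rpower_exp_const (s - 1)).
  assert (HC : 0 < C) by apply exp_pos.
  assert (Hexp : is_RInt (fun x => C * exp (- (/ 2 * x))) 1 v
                   (-2 * C * exp (- (/ 2 * v)) - -2 * C * exp (- (/ 2 * 1)))).
  { apply (is_RInt_derive (V := R_CompleteNormedModule) (fun x => -2 * C * exp (- (/ 2 * x)))).
    - intros x _. auto_derive; [auto | field].
    - intros x _. apply (continuous_mult (fun _ => C) (fun x => exp (- (/ 2 * x)))).
      + apply continuous_const.
      + apply exp_opp_continuous. }
  assert (Hle : RInt (gamma_integrand s) 1 v
                <= -2 * C * exp (- (/ 2 * v)) - -2 * C * exp (- (/ 2 * 1))).
  { apply (is_RInt_le (gamma_integrand s) (fun x => C * exp (- (/ 2 * x))) 1 v);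
      [exact Hv | | exact Hexp |].
    - apply (RInt_correct (V := R_CompleteNormedModule)), ex_RInt_0_oo; try lra.
      apply gamma_integrand_continuous.
    - intros x Hx. replace (- (/ 2 * x)) with (- x / 2) by field.
      apply Rpower_exp_le. lra. }
  assert (exp (- (/ 2 * 1)) <= 1) by (rewrite <- exp_0 at 2; apply exp_le_compat; lra).
  assert (0 < C * exp (- (/ 2 * v))) by (apply Rmult_lt_0_compat; [exact HC | apply exp_pos]).
  assert (C * exp (- (/ 2 * 1)) <= C * 1) by (apply Rmult_le_compat_l; lra).
  lra.
Qed.

Lemma RInt_gamma_integrand_bounded (s u v : R) :
  0 < s -> 0 < u <= v -> RInt (gamma_integrand s) u v <= / s + 2 * Rpower_exp_const (s - 1).
Proof.
  intros Hs Huv.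
  assert (Hmin : 0 < Rmin u 1) by (apply Rmin_glb_lt; lra).
  pose proof (Rmin_l u 1). pose proof (Rmin_r u 1). pose proof (Rmax_l v 1). pose proof (Rmax_r v 1).
  assert (Hcont : forall t, 0 < t -> continuous (gamma_integrand s) t)
    by apply gamma_integrand_continuous.
  assert (Hge0 : forall t, 0 < t -> 0 <= gamma_integrand s t)
    by (intros; left; apply gamma_integrand_gt0).
  eapply Rle_trans.
  { apply (RInt_subinterval_le _ Hcont Hge0 u v (Rmin u 1) (Rmax v 1)); lra. }
  rewrite <- (RInt_Chasles (V := R_CompleteNormedModule) _ (Rmin u 1) 1 (Rmax v 1))
    by (apply ex_RInt_0_oo; auto; lra).
  pose proof (RInt_gamma_integrand_le_0_1 s (Rmin u 1) Hs ltac:(lra)).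
  pose proof (RInt_gamma_integrand_le_1_oo s (Rmax v 1) ltac:(lra)).
  simpl. unfold plus; simpl. lra.
Qed.

Lemma is_RInt_gen_Gamma_sup (s : R) : 0 < s ->
  is_RInt_gen (gamma_integrand s) (at_right 0) (Rbar_locally p_infty) (Gamma s)
  /\ forall u v, 0 < u <= v -> RInt (gamma_integrand s) u v <= Gamma s.
Proof.
  intros Hs.
  destruct (is_RInt_gen_0_oo_sup (gamma_integrand s) (gamma_integrand_continuous s)
              (fun t _ => Rlt_le _ _ (gamma_integrand_gt0 s t))
              _ (fun u v => RInt_gamma_integrand_bounded s u v Hs)) as [L [HL Hsup]].
  replace (Gamma s) with L; [now split|].
  symmetry. exact (is_RInt_gen_unique (V := R_CompleteNormedModule) _ L HL).
Qed.

Lemma Gamma_gt0 (s : R) : 0 < s -> 0 < Gamma s.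
Proof.
  intros Hs. apply Rlt_le_trans with (RInt (gamma_integrand s) 1 2).
  - apply RInt_gt_0; [lra | intros; apply gamma_integrand_gt0 |].
    intros; apply gamma_integrand_continuous; lra.
  - apply is_RInt_gen_Gamma_sup; lra.
Qed.

Lemma gamma_integrand_lim_0 (s : R) :
  1 < s -> filterlim (gamma_integrand s) (at_right 0) (locally 0).
Proof.
  intros Hs. apply filterlim_locally. intros eps.
  exists (mkposreal (exp (ln eps / (s - 1))) (exp_pos _)).
  intros u Hu Hu0. rewrite ball_R_iff in Hu |- *. simpl in Hu.
  rewrite Rminus_0_r, Rabs_right in Hu by lra.
  rewrite Rminus_0_r, Rabs_right by (left; apply gamma_integrand_gt0).
  assert (Hpow : Rpower u (s - 1) < eps).
  { unfold Rpower. rewrite <- (exp_ln eps) by apply cond_pos. apply exp_increasing.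
    apply ln_increasing in Hu; [|exact Hu0]. rewrite ln_exp in Hu.
    apply Rmult_lt_compat_l with (r := s - 1) in Hu; [|lra].
    replace ((s - 1) * (ln eps / (s - 1))) with (ln eps) in Hu by (field; lra). lra. }
  assert (exp (- u) < 1) by (rewrite <- exp_0; apply exp_increasing; lra).
  pose proof (Rpower_gt0 u (s - 1)). pose proof (exp_pos (- u)).
  unfold gamma_integrand. nra.
Qed.

Lemma gamma_integrand_lim_oo (s : R) :
  filterlim (gamma_integrand s) (Rbar_locally p_infty) (locally 0).
Proof.
  apply filterlim_locally. intros eps. set (C := Rpower_exp_const (s - 1)).
  assert (HC : 0 < C) by apply exp_pos.
  assert (Heps : 0 < eps / C) by (apply Rdiv_lt_0_compat; [apply cond_pos | exact HC]).
  exists (Rmax 1 (-2 * ln (eps / C))). intros v Hv.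
  pose proof (Rmax_l 1 (-2 * ln (eps / C))). pose proof (Rmax_r 1 (-2 * ln (eps / C))).
  rewrite ball_R_iff, Rminus_0_r, Rabs_right by (left; apply gamma_integrand_gt0).
  apply Rle_lt_trans with (C * exp (- v / 2)); [apply Rpower_exp_le; lra|].
  assert (Hexp : exp (- v / 2) < eps / C).
  { rewrite <- (exp_ln (eps / C)) by exact Heps. apply exp_increasing. lra. }
  apply Rmult_lt_compat_l with (r := C) in Hexp; [|exact HC].
  replace (C * (eps / C)) with (pos eps) in Hexp by (field; lra). exact Hexp.
Qed.

Lemma Derive_gamma_integrand (s t : R) :
  0 < t -> Derive (gamma_integrand (s + 1)) t = s * gamma_integrand s t - gamma_integrand (s + 1) t.
Proof. intros Ht. now apply is_derive_unique, is_derive_gamma_integrand. Qed.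

Lemma is_RInt_gen_Derive_gamma_integrand (s : R) : 0 < s ->
  is_RInt_gen (Derive (gamma_integrand (s + 1))) (at_right 0) (Rbar_locally p_infty) 0.
Proof.
  intros Hs.
  enough (H : is_RInt_gen (Derive (gamma_integrand (s + 1)))
                (at_right 0) (Rbar_locally p_infty) (0 - 0)) by now rewrite Rminus_0_r in H.
  apply is_RInt_gen_Derive.
  - apply filter_prod_0_oo. intros u v Hu Hv x Hx; simpl in Hx.
    eexists. apply is_derive_gamma_integrand.
    pose proof (Rmin_glb_lt u v 0 Hu Hv). lra.
  - apply filter_prod_0_oo. intros u v Hu Hv x Hx; simpl in Hx.
    assert (Hx0 : 0 < x) by (pose proof (Rmin_glb_lt u v 0 Hu Hv); lra).
    apply (continuous_ext_loc _ (fun t => s * gamma_integrand s t - gamma_integrand (s + 1) t)).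
    + apply (locally_interval _ x 0 p_infty); [exact Hx0 | exact I |].
      intros y Hy _. symmetry. exact (Derive_gamma_integrand s y Hy).
    + apply (continuous_minus (V := R_NormedModule)
               (fun t => scal s (gamma_integrand s t)) (gamma_integrand (s + 1))).
      * apply (continuous_scal_r (K := R_AbsRing) (V := R_NormedModule)).
        exact (gamma_integrand_continuous s x Hx0).
      * exact (gamma_integrand_continuous (s + 1) x Hx0).
  - apply gamma_integrand_lim_0. lra.
  - apply gamma_integrand_lim_oo.
Qed.

(* Integration by parts: [gamma_integrand (s + 1)] vanishes at both ends. *)
Lemma Gamma_succ (s : R) : 0 < s -> Gamma (s + 1) = s * Gamma s.
Proof.
  intros Hs.
  assert (Hscal := is_RInt_gen_scal _ s _ (proj1 (is_RInt_gen_Gamma_sup s Hs))).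
  assert (Hsucc := is_RInt_gen_minus _ _ _ _ Hscal (is_RInt_gen_Derive_gamma_integrand s Hs)).
  apply (is_RInt_gen_ext _ (gamma_integrand (s + 1))) in Hsucc.
  - change (RInt_gen (gamma_integrand (s + 1)) (at_right 0) (Rbar_locally p_infty) = s * Gamma s).
    rewrite (is_RInt_gen_unique (V := R_CompleteNormedModule) _ _ Hsucc).
    unfold minus, plus, opp, scal; simpl. unfold mult; simpl. ring.
  - apply filter_prod_0_oo. intros u v Hu Hv x Hx; simpl in Hx.
    assert (Hx0 : 0 < x) by (pose proof (Rmin_glb_lt u v 0 Hu Hv); lra).
    rewrite (Derive_gamma_integrand s x Hx0).
    unfold minus, plus, opp, scal; simpl. unfold mult; simpl. ring.
Qed.

Lemma rgamma_of_pos (s : R) : 0 < s -> rgamma s = / Gamma s.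
Proof.
  intros Hs. unfold rgamma.
  assert (Hup : (up (- s) <= 0)%Z).
  { destruct (archimed (- s)) as [H1 H2].
    apply Z.lt_succ_r, lt_IZR. simpl. lra. }
  destruct (up (- s)); [| lia |]; simpl; rewrite Rplus_0_r; unfold Rdiv; ring.
Qed.

Lemma rgamma_of_nonpos (s : R) : -1 < s <= 0 -> rgamma s = s / Gamma (s + 1).
Proof.
  intros Hs. unfold rgamma.
  replace (up (- s)) with 1%Z by (apply (up_tech (- s) 0); simpl; lra).
  simpl. f_equal. ring.
Qed.

Lemma rgamma_gt0 (s : R) : 0 < s -> 0 < rgamma s.
Proof. intros Hs. rewrite rgamma_of_pos by exact Hs. now apply Rinv_0_lt_compat, Gamma_gt0. Qed.

Lemma rgamma_rec (s : R) : -1 < s -> rgamma s = s * rgamma (s + 1).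
Proof.
  intros Hs. destruct (Rlt_or_le 0 s) as [Hpos | Hnpos].
  - rewrite !rgamma_of_pos, Gamma_succ by lra.
    pose proof (Gamma_gt0 s Hpos). field. split; lra.
  - rewrite rgamma_of_nonpos, rgamma_of_pos by lra. unfold Rdiv. ring.
Qed.

Lemma sum_f_R0_ge0_sym (f : nat -> R) (n : nat) :
  (forall k, (k <= n)%nat -> 0 <= f k + f (n - k)%nat) -> 0 <= sum_f_R0 f n.
Proof.
  intros Hf.
  assert (Hsum : 0 <= sum_f_R0 (fun k => f k + f (n - k)%nat) n).
  { rewrite <- (Rmult_0_l (INR (S n))), <- sum_cte. now apply sum_Rle. }
  rewrite plus_sum, sum_f_R0_skip in Hsum. lra.
Qed.

Definition turan_weight (b : R) (p r : nat) : R := 1 - (INR p + b - 1) / (INR r + b).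

Section TuranSeries.

Variables (a b z : R) (q : nat -> R).
Hypotheses (a_gt0 : 0 < a) (b_gt0 : 0 < b) (z_gt0 : 0 < z) (q_gt0 : forall k, 0 < q k).
Hypothesis q_succ : forall k, q (S k) = q k * z / ((INR k + a) * (INR k + b)).

Lemma ex_series_Rabs_q : ex_series (fun k => Rabs (q k)).
Proof.
  apply ex_series_DAlembert with 0; [lra | intros k; pose proof (q_gt0 k); lra |].
  assert (Hlim : is_lim_seq (fun k => z * / ((INR k + a) * (INR k + b))) (z * 0)).
  { assert (Hshift : forall c, is_lim_seq (fun k => INR k + c) p_infty).
    { intros c. eapply is_lim_seq_plus;
        [apply is_lim_seq_INR | apply is_lim_seq_const | reflexivity]. }
    apply (is_lim_seq_scal_l _ z (Rbar_inv p_infty)), is_lim_seq_inv; [|discriminate].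
    eapply is_lim_seq_mult; [apply Hshift | apply Hshift | reflexivity]. }
  rewrite Rmult_0_r in Hlim. eapply is_lim_seq_ext; [|exact Hlim].
  intros k. pose proof (q_gt0 k). pose proof (pos_INR k).
  rewrite q_succ, Rabs_right.
  - field. repeat split; lra.
  - apply Rle_ge, Rdiv_le_0_compat; [|nra].
    apply Rdiv_le_0_compat; [nra | apply Rmult_lt_0_compat; lra].
Qed.

(* [(k + b) q (k + 1) = z q k / (k + a)], so the shifted series is dominated by [q]. *)
Lemma ex_series_Rabs_q_pred_b : ex_series (fun k => Rabs ((INR k + b - 1) * q k)).
Proof.
  apply (ex_series_incr_1 (K := R_AbsRing) (V := R_NormedModule)).
  apply (ex_series_le (K := R_AbsRing) (V := R_CompleteNormedModule))
    with (b := fun k => z / a * Rabs (q k)).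
  - intros k. change (norm ?x) with (Rabs x). rewrite Rabs_Rabsolu.
    pose proof (q_gt0 k). pose proof (pos_INR k).
    rewrite q_succ, S_INR.
    replace ((INR k + 1 + b - 1) * (q k * z / ((INR k + a) * (INR k + b))))
      with (z * q k * / (INR k + a)) by (field; split; lra).
    rewrite (Rabs_right (q k)), Rabs_right by (try apply Rle_ge, Rmult_le_pos; try nra;
                                               left; apply Rinv_0_lt_compat; lra).
    replace (z / a * q k) with (z * q k * / a) by (field; lra).
    apply Rmult_le_compat_l; [nra|]. apply Rinv_le_contravar; lra.
  - apply (ex_series_scal_l (K := R_AbsRing) (V := R_NormedModule)), ex_series_Rabs_q.
Qed.

Lemma ex_series_Rabs_q_succ_b : ex_series (fun k => Rabs (q k / (INR k + b))).
Proof.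
  apply (ex_series_le (K := R_AbsRing) (V := R_CompleteNormedModule))
    with (b := fun k => / b * Rabs (q k)).
  - intros k. change (norm ?x) with (Rabs x). rewrite Rabs_Rabsolu.
    pose proof (q_gt0 k). pose proof (pos_INR k).
    rewrite !Rabs_right by (try apply Rle_ge, Rdiv_le_0_compat; lra).
    unfold Rdiv. rewrite Rmult_comm. apply Rmult_le_compat_r; [lra|].
    apply Rinv_le_contravar; lra.
  - apply (ex_series_scal_l (K := R_AbsRing) (V := R_NormedModule)), ex_series_Rabs_q.
Qed.

Lemma turan_pair_ge0 (p r : nat) :
  0 <= q (S p) * q r * turan_weight b (S p) r + q (S r) * q p * turan_weight b (S r) p.
Proof.
  unfold turan_weight. rewrite !q_succ, !S_INR.
  pose proof (q_gt0 p). pose proof (q_gt0 r). pose proof (pos_INR p). pose proof (pos_INR r).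
  set (P := INR p) in *. set (Rr := INR r) in *.
  replace (q p * z / ((P + a) * (P + b)) * q r * (1 - (P + 1 + b - 1) / (Rr + b)) +
           q r * z / ((Rr + a) * (Rr + b)) * q p * (1 - (Rr + 1 + b - 1) / (P + b)))
    with (z * q p * q r * ((Rr - P) * (Rr - P)) / ((P + a) * (P + b) * (Rr + a) * (Rr + b)))
    by (field; repeat split; lra).
  apply Rdiv_le_0_compat.
  - apply Rmult_le_pos; [|apply Rle_0_sqr].
    apply Rmult_le_pos; [apply Rmult_le_pos|]; lra.
  - repeat apply Rmult_lt_0_compat; lra.
Qed.

Lemma turan_pair_le (p r : nat) :
  0 <= q p * q r * (/ b - turan_weight b p r) + q r * q p * (/ b - turan_weight b r p).
Proof.
  unfold turan_weight.
  pose proof (q_gt0 p). pose proof (q_gt0 r). pose proof (pos_INR p). pose proof (pos_INR r).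
  set (P := INR p) in *. set (Rr := INR r) in *.
  replace (q p * q r * (/ b - (1 - (P + b - 1) / (Rr + b))) +
           q r * q p * (/ b - (1 - (Rr + b - 1) / (P + b))))
    with (q p * q r * (2 * P * Rr + b * (P + Rr) + b * ((P - Rr) * (P - Rr)))
          / (b * (P + b) * (Rr + b)))
    by (field; repeat split; lra).
  apply Rdiv_le_0_compat.
  - pose proof (Rle_0_sqr (P - Rr)). unfold Rsqr in *.
    apply Rmult_le_pos; [nra|]. nra.
  - repeat apply Rmult_lt_0_compat; lra.
Qed.

Definition turan_coef (n : nat) : R :=
  sum_f_R0 (fun k => q k * q (n - k)%nat * turan_weight b k (n - k)) n.

(* The term [k = 0] is nonnegative; the others pair off as [k + 1] with [n - k]. *)
Lemma turan_coef_ge0 (n : nat) : 0 <= turan_coef n.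
Proof.
  assert (H0 : forall r, 0 <= q 0 * q r * turan_weight b 0 r).
  { intros r. unfold turan_weight. pose proof (q_gt0 0). pose proof (q_gt0 r).
    pose proof (pos_INR r). simpl INR.
    replace (1 - (0 + b - 1) / (INR r + b)) with ((INR r + 1) / (INR r + b)) by (field; lra).
    apply Rmult_le_pos; [nra | apply Rdiv_le_0_compat; lra]. }
  unfold turan_coef. destruct n as [|m]; [apply H0|].
  rewrite decomp_sum by lia. simpl pred.
  apply Rplus_le_le_0_compat; [rewrite Nat.sub_0_r; apply H0|].
  apply sum_f_R0_ge0_sym. intros j Hj.
  replace (S m - S j)%nat with (m - j)%nat by lia.
  replace (S m - S (m - j))%nat with j by lia.
  apply turan_pair_ge0.
Qed.

Lemma turan_coef_le (n : nat) :
  turan_coef n <= / b * sum_f_R0 (fun k => q k * q (n - k)%nat) n.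
Proof.
  set (U := fun k => q k * q (n - k)%nat * (/ b - turan_weight b k (n - k))).
  enough (0 <= sum_f_R0 U n).
  { unfold U, turan_coef in *. rewrite scal_sum.
    replace (sum_f_R0 _ n) with
      (sum_f_R0 (fun k => q k * q (n - k)%nat * / b) n
       - sum_f_R0 (fun k => q k * q (n - k)%nat * turan_weight b k (n - k)) n) in H.
    - lra.
    - rewrite <- minus_sum. apply sum_eq. intros k _. ring. }
  apply sum_f_R0_ge0_sym. intros k Hk. unfold U.
  replace (n - (n - k))%nat with k by lia. apply turan_pair_le.
Qed.

Lemma is_series_turan_coef :
  is_series turan_coef
    (Series q * Series q
     - Series (fun k => (INR k + b - 1) * q k) * Series (fun k => q k / (INR k + b))).
Proof.
  pose proof ex_series_Rabs_q as Hq.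
  pose proof ex_series_Rabs_q_pred_b as Hqm.
  pose proof ex_series_Rabs_q_succ_b as Hqp.
  assert (Hsq := is_series_mult _ _ _ _ (Series_correct _ (ex_series_Rabs _ Hq))
                   (Series_correct _ (ex_series_Rabs _ Hq)) Hq Hq).
  assert (Hcross := is_series_mult _ _ _ _ (Series_correct _ (ex_series_Rabs _ Hqm))
                      (Series_correct _ (ex_series_Rabs _ Hqp)) Hqm Hqp).
  eapply is_series_ext; [|exact (is_series_minus _ _ _ _ Hsq Hcross)].
  intros n. unfold turan_coef, turan_weight, plus, opp; simpl.
  rewrite <- Rminus_def, <- minus_sum. apply sum_eq. intros k _.
  pose proof (pos_INR (n - k)). field. lra.
Qed.

Lemma turan_series_bounds :
  q 0 ^ 2 / b <= Series q * Series q
     - Series (fun k => (INR k + b - 1) * q k) * Series (fun k => q k / (INR k + b))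
  /\ Series q * Series q
     - Series (fun k => (INR k + b - 1) * q k) * Series (fun k => q k / (INR k + b))
     <= Series q * Series q / b.
Proof.
  pose proof is_series_turan_coef as Hc.
  rewrite <- (is_series_unique _ _ Hc).
  assert (Hex : ex_series turan_coef) by (eexists; exact Hc).
  split.
  - rewrite Series_incr_1 by exact Hex.
    replace (turan_coef 0) with (q 0 ^ 2 / b) by (unfold turan_coef, turan_weight; simpl; field; lra).
    enough (0 <= Series (fun k => turan_coef (S k))) by lra.
    rewrite <- (Rmult_0_l (Series (fun k => turan_coef (S k)))), <- Series_scal_l.
    apply Series_le; [intros k; rewrite Rmult_0_l; split; [lra | apply turan_coef_ge0]|].
    exact (proj1 (ex_series_incr_1 (K := R_AbsRing) (V := R_NormedModule) _) Hex).
  - assert (Hsq : is_series (fun n => / b * sum_f_R0 (fun k => q k * q (n - k)%nat) n)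
                    (/ b * (Series q * Series q))).
    { apply (is_series_scal_l (K := R_AbsRing) (V := R_NormedModule)), is_series_mult;
        try apply Series_correct, ex_series_Rabs; apply ex_series_Rabs_q. }
    replace (Series q * Series q / b) with (/ b * (Series q * Series q)) by (unfold Rdiv; ring).
    rewrite <- (is_series_unique _ _ Hsq).
    apply Series_le; [|eexists; exact Hsq].
    intros n. split; [apply turan_coef_ge0 | apply turan_coef_le].
Qed.

End TuranSeries.

Definition lommel_coef (a b z : R) (k : nat) : R :=
  rgamma (INR k + a) * rgamma (INR k + b) * z ^ k.

Lemma lommel_coef_gt0 (a b z : R) (k : nat) :
  0 < a -> 0 < b -> 0 < z -> 0 < lommel_coef a b z k.
Proof.
  intros Ha Hb Hz. pose proof (pos_INR k). unfold lommel_coef.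
  apply Rmult_lt_0_compat; [apply Rmult_lt_0_compat; apply rgamma_gt0; lra | now apply pow_lt].
Qed.

Lemma lommel_coef_succ (a b z : R) (k : nat) : 0 < a -> 0 < b ->
  lommel_coef a b z (S k) = lommel_coef a b z k * z / ((INR k + a) * (INR k + b)).
Proof.
  intros Ha Hb. pose proof (pos_INR k). unfold lommel_coef. rewrite S_INR.
  rewrite (rgamma_rec (INR k + a)), (rgamma_rec (INR k + b)) by lra.
  replace (INR k + a + 1) with (INR k + 1 + a) by ring.
  replace (INR k + b + 1) with (INR k + 1 + b) by ring.
  simpl. field. split; lra.
Qed.

Lemma lommel_coef_pred_b (a b z : R) (k : nat) : 0 < b ->
  lommel_coef a (b - 1) z k = (INR k + b - 1) * lommel_coef a b z k.
Proof.
  intros Hb. pose proof (pos_INR k). unfold lommel_coef.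
  replace (INR k + (b - 1)) with (INR k + b - 1) by ring.
  rewrite (rgamma_rec (INR k + b - 1)) by lra.
  replace (INR k + b - 1 + 1) with (INR k + b) by ring. ring.
Qed.

Lemma lommel_coef_succ_b (a b z : R) (k : nat) : 0 < b ->
  lommel_coef a (b + 1) z k = lommel_coef a b z k / (INR k + b).
Proof.
  intros Hb. pose proof (pos_INR k). unfold lommel_coef.
  rewrite (rgamma_rec (INR k + b)) by lra.
  replace (INR k + (b + 1)) with (INR k + b + 1) by ring. field. lra.
Qed.

Lemma Rpower_plus_double_INR (y c : R) (k : nat) :
  0 < y -> Rpower y (c + 2 * INR k) = Rpower y c * (y ^ 2) ^ k.
Proof.
  intros Hy. rewrite Rpower_plus, <- pow_mult, <- Rpower_pow by exact Hy.
  rewrite mult_INR. reflexivity.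
Qed.

Lemma ttilde_lommel_coef (mu nu x a b : R) :
  0 < x -> a = (mu - nu + 3) / 2 -> b = (mu + nu + 3) / 2 ->
  ttilde mu nu x = Rpower (x / 2) (mu + 1) * Series (lommel_coef a b ((x / 2) ^ 2)).
Proof.
  intros Hx -> ->. unfold ttilde. rewrite <- Series_scal_l. apply Series_ext. intros k.
  replace (mu + 2 * INR k + 1) with (mu + 1 + 2 * INR k) by ring.
  rewrite Rpower_plus_double_INR by lra. unfold lommel_coef. ring.
Qed.

Lemma LommelDelta_lommel_coef (mu nu x a b : R) :
  0 < x -> 0 < b -> a = (mu - nu + 3) / 2 -> b = (mu + nu + 3) / 2 ->
  let q := lommel_coef a b ((x / 2) ^ 2) in
  LommelDelta mu nu x = Rpower (x / 2) (2 * mu + 2) *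
    (Series q * Series q
     - Series (fun k => (INR k + b - 1) * q k) * Series (fun k => q k / (INR k + b))).
Proof.
  intros Hx Hb Ha_eq Hb_eq q. unfold LommelDelta.
  rewrite (ttilde_lommel_coef mu nu x a b), (ttilde_lommel_coef (mu - 1) (nu - 1) x a (b - 1)),
    (ttilde_lommel_coef (mu + 1) (nu + 1) x a (b + 1)) by (auto; lra).
  rewrite (Series_ext (lommel_coef a (b - 1) _) (fun k => (INR k + b - 1) * q k)) by (intros; now apply lommel_coef_pred_b).
  rewrite (Series_ext (lommel_coef a (b + 1) _) (fun k => q k / (INR k + b)))
    by (intros; now apply lommel_coef_succ_b).
  replace (mu - 1 + 1) with mu by ring. replace (mu + 1 + 1) with (mu + 2) by ring.
  assert (Hsq : Rpower (x / 2) (mu + 1) ^ 2 = Rpower (x / 2) (2 * mu + 2))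
    by (simpl; rewrite Rmult_1_r, <- Rpower_plus; f_equal; ring).
  assert (Hprod : Rpower (x / 2) mu * Rpower (x / 2) (mu + 2) = Rpower (x / 2) (2 * mu + 2))
    by (rewrite <- Rpower_plus; f_equal; ring).
  rewrite Rpow_mult_distr, Hsq, <- Hprod. fold q. ring.
Qed.

Theorem theorem3p4 (mu nu x : R) :
  -3 < mu -> Rabs nu < mu + 3 -> 0 < x ->
  0 < 2 * Rpower (x / 2) (2 * mu + 2)
        / ((mu + nu + 3) * (Gamma ((mu - nu + 3) / 2) * Gamma ((mu + nu + 3) / 2)) ^ 2)
  /\ 2 * Rpower (x / 2) (2 * mu + 2)
        / ((mu + nu + 3) * (Gamma ((mu - nu + 3) / 2) * Gamma ((mu + nu + 3) / 2)) ^ 2)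
     <= LommelDelta mu nu x
  /\ LommelDelta mu nu x <= 2 * (ttilde mu nu x) ^ 2 / (mu + nu + 3).
Proof.
  intros Hmu Hnu Hx. apply Rabs_def2 in Hnu.
  set (a := (mu - nu + 3) / 2). set (b := (mu + nu + 3) / 2).
  assert (Ha : 0 < a) by (unfold a; lra). assert (Hb : 0 < b) by (unfold b; lra).
  assert (Hz : 0 < (x / 2) ^ 2) by (apply pow_lt; lra).
  set (q := lommel_coef a b ((x / 2) ^ 2)).
  destruct (turan_series_bounds a b _ q Ha Hb Hz (fun k => lommel_coef_gt0 a b _ k Ha Hb Hz)
              (fun k => lommel_coef_succ a b _ k Ha Hb)) as [Hlow Hupp].
  rewrite (LommelDelta_lommel_coef mu nu x a b Hx Hb eq_refl eq_refl).
  rewrite (ttilde_lommel_coef mu nu x a b Hx eq_refl eq_refl). fold q.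
  assert (Hq0 : q 0%nat = / Gamma a * / Gamma b)
    by (unfold q, lommel_coef; simpl; rewrite !Rplus_0_l, !rgamma_of_pos by lra; ring).
  pose proof (Gamma_gt0 a Ha). pose proof (Gamma_gt0 b Hb).
  set (Y := Rpower (x / 2) (2 * mu + 2)). assert (HY : 0 < Y) by apply Rpower_gt0.
  replace (mu + nu + 3) with (2 * b) by (unfold b; field).
  replace (2 * Y / (2 * b * (Gamma a * Gamma b) ^ 2)) with (Y * (q 0%nat ^ 2 / b))
    by (rewrite Hq0; field; repeat split; lra).
  replace (2 * (Rpower (x / 2) (mu + 1) * Series q) ^ 2 / (2 * b))
    with (Y * (Series q * Series q / b))
    by (unfold Y; replace (2 * mu + 2) with ((mu + 1) + (mu + 1)) by ring;
        rewrite Rpower_plus; field; lra).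
  assert (0 < q 0%nat ^ 2 / b) by (apply Rdiv_lt_0_compat; [apply pow_lt, lommel_coef_gt0 | ]; lra).
  split; [|split]; [apply Rmult_lt_0_compat | apply Rmult_le_compat_l | apply Rmult_le_compat_l];
    lra.
Qed.
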